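(* Let $T_1=(V_1,E_1)$ and $T_2=(V_2,E_2)$ be trees with $|V_1|=|V_2|=n$. Suppose there exist labelings $\mathcal{L}_1,\mathcal{L}_2$ and edge orderings $\pi_1,\pi_2$ of $T_1,T_2$ respectively, and an element $\sigma\in S_n$, such that $$\sigma\,\mathcal{K}_{\mathcal{L}_1,\pi_1}(T_1)\,\sigma^{-1}=\mathcal{K}_{\mathcal{L}_2,\pi_2}(T_2).$$ Then $T_1$ and $T_2$ are isomorphic.
   Context: $\mathbb{C}[S_n]$ is the group algebra of the symmetric group $S_n$. A labeling of a graph $G=(V,E)$ with $|V|=n$ is a bijection $\mathcal{L}:V\to\{1,\dots,n\}$; under it an edge $\{u,v\}$ corresponds to the transposition $(\mathcal{L}(u)\,\mathcal{L}(v))\in S_n$. For a labeling $\mathcal{L}$ and an ordering $\pi=(e_1,\dots,e_m)$ of $E$, $\mathcal{K}_{\mathcal{L},\pi}(G)=n!\,(1-t_1)(1-t_2)\cdots(1-t_m)\in\mathbb{C}[S_n]$, where $t_r$ is the transposition corresponding to $e_r$ under $\mathcal{L}$ and the product is in the order of $\pi$. *)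

From mathcomp Require Import all_boot all_order all_algebra all_fingroup all_field.
Set Implicit Arguments. Unset Strict Implicit. Unset Printing Implicit Defensive.
Import GRing.Theory.
Local Open Scope ring_scope.

Definition simple_graph (V : finType) (e : rel V) : Prop :=
  symmetric e /\ irreflexive e.

Definition connected_graph (V : finType) (e : rel V) : Prop :=
  forall x y : V, connect e x y.

Definition acyclic_graph (V : finType) (e : rel V) : Prop :=
  forall c : seq V, ucycle e c -> (size c < 3)%N.

Definition is_tree (V : finType) (e : rel V) : Prop :=
  [/\ simple_graph e, connected_graph e & acyclic_graph e].

Definition edge_set (V : finType) (e : rel V) : {set {set V}} :=
  [set E : {set V} | [exists u, exists v, e u v && (E == [set u; v])]].

(* an ordering of the edges: a list of (oriented) edges listing every
   edge of the graph exactly once *)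
Definition edge_ordering (V : finType) (e : rel V) (pi : seq (V * V)) : Prop :=
  all (fun p => e p.1 p.2) pi /\
  perm_eq [seq [set p.1; p.2] | p <- pi] (enum (edge_set e)).

(* labeling: a bijection V -> {1,...,n} (here 'I_n = {0,...,n-1}) *)
Definition labeling (V : finType) (n : nat) (L : V -> 'I_n) : Prop := bijective L.

Definition graph_iso (V1 V2 : finType) (e1 : rel V1) (e2 : rel V2) : Prop :=
  exists f : V1 -> V2, bijective f /\ forall x y, e2 (f x) (f y) = e1 x y.

Definition galg (n : nat) := {ffun 'S_n -> algC}.

Definition gmul n (a b : galg n) : galg n :=
  [ffun g : 'S_n => \sum_(h : 'S_n) a h * b (h^-1 * g)%g].

Definition gdelta n (g : 'S_n) : galg n := [ffun h : 'S_n => (h == g)%:R].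

Definition gone n : galg n := gdelta 1%g.

Definition one_minus n (t : 'S_n) : galg n := [ffun h => gone n h - gdelta t h].

Definition gscale n (c : algC) (a : galg n) : galg n := [ffun h => c * a h].

(* K_{L,pi}(G) = n! (1 - t_1)(1 - t_2)...(1 - t_m) *)
Definition Kelem (V : finType) (n : nat) (L : V -> 'I_n) (pi : seq (V * V)) : galg n :=
  gscale (n`!)%:R
    (foldr (fun p acc => gmul (one_minus (tperm (L p.1) (L p.2))) acc) (gone n) pi).

From mathcomp Require Import all_boot all_order all_algebra all_fingroup all_field.
From mathcomp Require Import zify.
Import GRing.Theory Num.Theory.
Set Implicit Arguments. Unset Strict Implicit. Unset Printing Implicit Defensive.

(* Expanding the product, the coefficient of g in (1 - t_1)...(1 - t_m) is a
   signed count of the subproducts of t_1 ... t_m that equal g.  When the t_i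
   are the transpositions of the edges of a forest, a subproduct of k of them
   has exactly n - k cycles, so it is a transposition only when k = 1, and then
   it is the transposition of that edge.  Hence the coefficient of (a b) is -1
   if {a, b} is an edge and 0 otherwise.  Conjugation by sigma maps the
   coefficient of (a b) to that of (sigma a sigma b), so the labelings composed
   with sigma give an isomorphism of the trees. *)

Lemma eq_set2 (T : finType) (a b c d : T) : [set a; b] = [set c; d] ->
  (a = c /\ b = d) \/ (a = d /\ b = c).
Proof.
move=> E.
have ha : a \in [set c; d] by rewrite -E !inE eqxx.
have hb : b \in [set c; d] by rewrite -E !inE eqxx orbT.
have hc : c \in [set a; b] by rewrite E !inE eqxx.
have hd : d \in [set a; b] by rewrite E !inE eqxx orbT.
move: ha hb hc hd; rewrite !inE => /orP[/eqP ha|/eqP ha] /orP[/eqP hb|/eqP hb]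
  /orP[/eqP hc|/eqP hc] /orP[/eqP hd|/eqP hd]; subst; auto.
Qed.

Lemma tperm_set2 (T : finType) (a b c d : T) :
  [set a; b] = [set c; d] -> tperm a b = tperm c d.
Proof. by case/eq_set2=> [[-> ->]|[-> ->]]; rewrite // tpermC. Qed.

Lemma set2_tperm (T : finType) (a b c d : T) : a != b ->
  tperm a b = tperm c d -> [set a; b] = [set c; d].
Proof.
move=> ab E.
have sub_cd x : x \in [set a; b] -> x \in [set c; d].
  move=> hx; rewrite !inE; have [//|xc] := eqVneq x c; have [//|xd] := eqVneq x d.
  rewrite eq_sym in xc; rewrite eq_sym in xd; have := tpermD xc xd; rewrite -E.
  by move: hx; rewrite !inE => /orP[]/eqP->; rewrite ?tpermL ?tpermR => /eqP;
     rewrite ?(negbTE ab) // eq_sym (negbTE ab).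
have := sub_cd a; have := sub_cd b; rewrite !inE !eqxx orbT /= => /(_ isT) hb /(_ isT) ha.
move: ha hb ab => /orP[]/eqP-> /orP[]/eqP->; rewrite ?eqxx // => _.
by rewrite setUC.
Qed.

Section Forest.
Variable T : finType.
Local Open Scope group_scope.

Definition tperm_prod (s : seq (T * T)) : {perm T} :=
  foldr (fun p acc => tperm p.1 p.2 * acc) 1 s.

Definition pair_sets (s : seq (T * T)) := [seq [set p.1; p.2] | p <- s].

Definition pair_rel (s : seq (T * T)) : rel T := fun a b => [set a; b] \in pair_sets s.

Lemma porbit1 (x : T) : porbit 1 x = [set x].
Proof. by rewrite porbit.unlock cycle1 imset_set1 /aperm perm1. Qed.

Lemma card_porbits1 : #|porbits (1 : {perm T})| = #|T|.
Proof. by rewrite /porbits (eq_imset _ porbit1) card_imset //; exact: set1_inj. Qed.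

Lemma card_porbits_tperm (a b : T) : a != b -> #|porbits (tperm a b)| + 1 = #|T|.
Proof.
move=> ab; have := porbits_mul_tperm 1 a b.
by rewrite /= mulg1 card_porbits1 porbit1 inE ab /=; lia.
Qed.

Lemma connect_tperm_prod s z : connect (pair_rel s) z (tperm_prod s z).
Proof.
elim: s z => [|p s IH] z /=; first by rewrite perm1 connect0.
rewrite permM; apply: (@connect_trans _ _ (tperm p.1 p.2 z)).
  case: tpermP => [->|->|_ _]; rewrite ?connect0 //; apply: connect1;
  by rewrite /pair_rel /= inE ?eqxx // setUC eqxx.
apply: connect_sub (IH _) => a b h; apply: connect1.
by move: h; rewrite /pair_rel /= inE => ->; rewrite orbT.
Qed.

Lemma connect_porbit_tperm_prod s x y :
  y \in porbit (tperm_prod s) x -> connect (pair_rel s) x y.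
Proof.
case/porbitP=> i ->{y}; elim: i => [|i IH]; first by rewrite expg0 perm1 connect0.
by rewrite expgSr permM; apply: connect_trans IH (connect_tperm_prod _ _).
Qed.

Variable r : rel T.
Hypothesis r_sym : symmetric r.
Hypothesis r_irr : irreflexive r.
Hypothesis r_acyclic : forall c : seq T, ucycle r c -> (size c < 3)%N.

Definition forest_seq s := all (fun p => r p.1 p.2) s && uniq (pair_sets s).

Lemma forest_seq_cons p s : forest_seq (p :: s) =
  [&& r p.1 p.2, [set p.1; p.2] \notin pair_sets s & forest_seq s].
Proof.
by rewrite /forest_seq /=; case: (r p.1 p.2); case: (all _ s);
   case: ([set p.1; p.2] \in pair_sets s).
Qed.

Lemma forest_seq_mask m s : forest_seq s -> forest_seq (mask m s).
Proof.
case/andP=> A U; apply/andP; split; first exact: all_mask.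
by rewrite /pair_sets map_mask mask_uniq.
Qed.

Lemma sub_pair_rel s : all (fun p => r p.1 p.2) s -> subrel (pair_rel s) r.
Proof.
move=> /allP A a b /mapP[p /A rp /eq_set2 [[-> ->]|[-> ->]]] //.
by rewrite r_sym.
Qed.

(* Each new edge joins two distinct cycles of the product of the previous ones,
   since otherwise a path between its ends would close a cycle. *)
Lemma card_porbits_forest s : forest_seq s -> #|porbits (tperm_prod s)| + size s = #|T|.
Proof.
elim: s => [|p s IH] /=; first by rewrite card_porbits1 addn0.
rewrite forest_seq_cons => /and3P[rp nin fs].
have := porbits_mul_tperm (tperm_prod s) p.1 p.2.
have -> : p.1 != p.2 by apply/eqP => E; move: rp; rewrite E r_irr.
suff -> : p.1 \notin porbit (tperm_prod s) p.2.
  by have := IH fs; rewrite /= => H1 H2; lia.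
apply/negP => /connect_porbit_tperm_prod /connectP [q pq lq].
have A : all (fun p => r p.1 p.2) s by case/andP: fs.
move: lq; case: (shortenP pq) => q' pq' uq _ lq'.
have /r_acyclic : ucycle r (p.2 :: q').
  apply/andP; split=> //; rewrite /= rcons_path -lq' rp andbT.
  by apply: (sub_path _ pq') => a b /(sub_pair_rel A).
case: q' pq' uq lq' => [|z [|w q']] /=.
- by move=> _ _ E; move: rp; rewrite E r_irr.
- by rewrite andbT => h _ E; move: nin; rewrite /pair_rel -E setUC in h; rewrite h.
- by [].
Qed.

Lemma size_forest_tperm s a b : forest_seq s -> a != b ->
  tperm_prod s = tperm a b -> size s = 1%N.
Proof.
move=> fs ab E; have := card_porbits_forest fs; have := card_porbits_tperm ab.
by rewrite E; lia.
Qed.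

End Forest.

Section GroupAlgebra.
Variable n : nat.
Local Open Scope ring_scope.

Definition one_minus_prod (s : seq ('I_n * 'I_n)) : galg n :=
  foldr (fun p acc => gmul (one_minus (tperm p.1 p.2)) acc) (gone n) s.

Lemma gmul_deltal (t : 'S_n) (a : galg n) g : gmul (gdelta t) a g = a (t^-1 * g)%g.
Proof.
rewrite ffunE (bigD1 t) //= ffunE eqxx mul1r big1 ?addr0 // => h ht.
by rewrite ffunE (negbTE ht) mul0r.
Qed.

Lemma gmul_deltar (a : galg n) (u : 'S_n) g : gmul a (gdelta u) g = a (g * u^-1)%g.
Proof.
rewrite ffunE (bigD1 (g * u^-1)%g) //= ffunE invMg invgK mulgKV eqxx mulr1.
rewrite big1 ?addr0 // => h hne; rewrite ffunE.
case: eqP => [E|]; last by rewrite mulr0.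
by move: hne; rewrite -E invMg invgK mulgA mulgV mul1g eqxx.
Qed.

Lemma gmul_one_minus (t : 'S_n) (a : galg n) g :
  gmul (one_minus t) a g = a g - a (t^-1 * g)%g.
Proof.
rewrite -gmul_deltal ffunE.
under eq_bigr do rewrite ffunE mulrBl.
rewrite sumrB ffunE; congr (_ - _).
rewrite (bigD1 1%g) //= ffunE eqxx mul1r invg1 mul1g big1 ?addr0 // => h ht.
by rewrite ffunE (negbTE ht) mul0r.
Qed.

Lemma one_minus_prod_cons p s g :
  one_minus_prod (p :: s) g = one_minus_prod s g - one_minus_prod s (tperm p.1 p.2 * g)%g.
Proof. by rewrite /= gmul_one_minus tpermV. Qed.

Lemma one_minus_prod_support s g :
  one_minus_prod s g != 0 -> exists m, g = tperm_prod (mask m s).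
Proof.
elim: s g => [|p s IH] g /=.
  by rewrite /gone ffunE; case: (g =P 1%g) => [-> _|]; [exists [::] | rewrite eqxx].
rewrite gmul_one_minus tpermV.
have [->|/IH [m ->]] := eqVneq (one_minus_prod s g) 0; last by exists (false :: m).
rewrite sub0r oppr_eq0 => /IH [m Em]; exists (true :: m) => /=.
by rewrite -Em tpermKg.
Qed.

Variable r : rel 'I_n.
Hypothesis r_sym : symmetric r.
Hypothesis r_irr : irreflexive r.
Hypothesis r_acyclic : forall c : seq 'I_n, ucycle r c -> (size c < 3)%N.

Let forest := forest_seq r.

Lemma one_minus_prod_nonedge s a b : forest s -> a != b ->
  [set a; b] \notin pair_sets s -> one_minus_prod s (tperm a b) = 0.
Proof.
move=> fs ab nin; apply/eqP; apply: contraNT nin => /one_minus_prod_support [m E].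
have := size_forest_tperm r_sym r_irr r_acyclic (forest_seq_mask m fs) ab (esym E).
case Em: (mask m s) E => [|p []] //= E _; move: E; rewrite mulg1 => /(set2_tperm ab) ->.
by apply: map_f; apply: (@mem_mask _ _ m); rewrite Em mem_head.
Qed.

Lemma one_minus_prod1 s : forest s -> one_minus_prod s 1%g = 1.
Proof.
elim: s => [|p s IH]; first by rewrite /= ffunE eqxx.
rewrite /forest forest_seq_cons => /and3P[rp nin fs].
have pab : p.1 != p.2 by apply/eqP => E; move: rp; rewrite E r_irr.
by rewrite one_minus_prod_cons mulg1 IH // one_minus_prod_nonedge // subr0.
Qed.

Lemma one_minus_prod_edge s a b : forest s -> a != b ->
  [set a; b] \in pair_sets s -> one_minus_prod s (tperm a b) = -1.
Proof.
elim: s => [|p s IH] // fps ab; move: (fps).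
rewrite /forest forest_seq_cons => /and3P[rp nin fs].
have pab : p.1 != p.2 by apply/eqP => E; move: rp; rewrite E r_irr.
rewrite one_minus_prod_cons inE.
have [E _|NE /= hin] := eqVneq [set a; b] [set p.1; p.2].
  by rewrite (tperm_set2 E) tperm2 one_minus_prod1 // one_minus_prod_nonedge // sub0r.
rewrite IH //; suff -> : one_minus_prod s (tperm p.1 p.2 * tperm a b)%g = 0 by rewrite subr0.
(* (p) (a b) is never a subproduct of s, else (a b) is a two-factor subproduct
   of p :: s that must reduce to the single factor (p). *)
apply/eqP; apply: contra_neqT NE => /one_minus_prod_support [m E].
have E' : tperm_prod (mask (true :: m) (p :: s)) = tperm a b by rewrite /= -E tpermKg.
have := size_forest_tperm r_sym r_irr r_acyclic (forest_seq_mask (true :: m) fps) ab E'.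
by move: E' => /=; case: (mask m s) => //= /esym; rewrite mulg1 => /(set2_tperm ab).
Qed.

End GroupAlgebra.

Lemma KelemE n (V : finType) (L : V -> 'I_n) (pi : seq (V * V)) g :
  Kelem L pi g = ((n`!)%:R * one_minus_prod [seq (L p.1, L p.2) | p <- pi] g)%R.
Proof. by rewrite /Kelem ffunE /one_minus_prod foldr_map. Qed.

Section LabeledTree.
Variables (n : nat) (V : finType) (e : rel V) (L : V -> 'I_n) (Linv : 'I_n -> V).
Hypothesis LK : cancel L Linv.
Hypothesis LinvK : cancel Linv L.
Hypothesis tree_e : is_tree e.
Variable pi : seq (V * V).
Hypothesis hpi : edge_ordering e pi.

Definition label_rel : rel 'I_n := fun a b => e (Linv a) (Linv b).
Definition label_seq := [seq (L p.1, L p.2) | p <- pi].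

Lemma tree_sym : symmetric e. Proof. by case: tree_e => [[]]. Qed.
Lemma tree_irr : irreflexive e. Proof. by case: tree_e => [[]]. Qed.

Lemma label_rel_sym : symmetric label_rel.
Proof. by move=> a b; rewrite /label_rel tree_sym. Qed.

Lemma label_rel_irr : irreflexive label_rel.
Proof. by move=> a; rewrite /label_rel tree_irr. Qed.

Lemma label_rel_acyclic c : ucycle label_rel c -> (size c < 3)%N.
Proof.
move=> /andP[cc uc]; case: tree_e => _ _ /(_ (map Linv c)); rewrite size_map; apply.
by rewrite /ucycle cycle_map cc (map_inj_uniq (can_inj LinvK)) uc.
Qed.

Lemma pair_sets_label_seq :
  pair_sets label_seq = [seq L @: A | A : {set V} <- [seq [set p.1; p.2] | p <- pi]].
Proof.
rewrite /pair_sets /label_seq -!map_comp; apply: eq_map => p /=.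
by rewrite imsetU1 imset_set1.
Qed.

Lemma forest_label_seq : forest_seq label_rel label_seq.
Proof.
case: hpi => A P; apply/andP; split.
  by rewrite all_map; apply: sub_all A => p /=; rewrite /label_rel !LK.
rewrite pair_sets_label_seq (map_inj_uniq (imset_inj (can_inj LK))) (perm_uniq P).
exact: enum_uniq.
Qed.

Lemma edge_label_seq x y : e x y = ([set L x; L y] \in pair_sets label_seq).
Proof.
case: hpi => A P.
have -> : [set L x; L y] = L @: [set x; y] by rewrite imsetU1 imset_set1.
rewrite pair_sets_label_seq (mem_map (imset_inj (can_inj LK))) (perm_mem P) mem_enum inE.
apply/idP/existsP => [exy|[u /existsP[v /andP[euv /eqP /eq_set2]]]].
  by exists x; apply/existsP; exists y; rewrite exy eqxx.
by case=> [[-> ->]|[-> ->]] //; rewrite tree_sym.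
Qed.

Lemma Kelem_tperm_neq0 x y : x != y ->
  (Kelem L pi (tperm (L x) (L y)) != 0)%R = e x y.
Proof.
move=> xy; have Lxy : L x != L y by rewrite (inj_eq (can_inj LK)).
have fs := forest_label_seq.
have rs := label_rel_sym; have ri := label_rel_irr; have ra := label_rel_acyclic.
rewrite KelemE -/label_seq mulf_eq0 pnatr_eq0 eqn0Ngt fact_gt0 /= edge_label_seq.
have [hin|nin] := boolP (_ \in _).
  by rewrite (one_minus_prod_edge rs ri ra fs Lxy hin) oppr_eq0 oner_eq0.
by rewrite (one_minus_prod_nonedge rs ri ra fs Lxy nin) eqxx.
Qed.

End LabeledTree.

Theorem mainTheorem10 (n : nat) (V1 V2 : finType) (e1 : rel V1) (e2 : rel V2)
  (T1 : is_tree e1) (T2 : is_tree e2)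
  (card1 : #|V1| = n) (card2 : #|V2| = n)
  (L1 : V1 -> 'I_n) (L2 : V2 -> 'I_n) (pi1 : seq (V1 * V1)) (pi2 : seq (V2 * V2))
  (hL1 : labeling L1) (hL2 : labeling L2)
  (hpi1 : edge_ordering e1 pi1) (hpi2 : edge_ordering e2 pi2)
  (sigma : 'S_n) :
  gmul (gmul (gdelta sigma) (Kelem L1 pi1)) (gdelta (sigma^-1)%g) = Kelem L2 pi2 ->
  graph_iso e1 e2.
Proof.
move=> conjK; case: hL1 => L1inv L1K L1invK; case: hL2 => L2inv L2K L2invK.
have K_conj a b : Kelem L2 pi2 (tperm a b) = Kelem L1 pi1 (tperm (sigma a) (sigma b)).
  by rewrite -conjK gmul_deltar gmul_deltal invgK -tpermJ conjgE.
pose f x := L2inv ((sigma^-1)%g (L1 x)).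
exists f; split.
  exists (fun y => L1inv (sigma (L2 y))) => [x|y]; first by rewrite L2invK permKV L1K.
  by rewrite /f L1invK permK L2K.
move=> x y; have [<-|xy] := eqVneq x y; first by rewrite (tree_irr T1) (tree_irr T2).
have fxy : f x != f y.
  by rewrite /f (inj_eq (can_inj L2invK)) (inj_eq (@perm_inj _ _)) (inj_eq (can_inj L1K)).
rewrite -(Kelem_tperm_neq0 L2K L2invK T2 hpi2 fxy) -(Kelem_tperm_neq0 L1K L1invK T1 hpi1 xy).
by rewrite /f !L2invK K_conj !permKV.
Qed.
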